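(* Let $S$ be a finite $p$-group and $\mathcal{A}$ a bifree $S$-algebra with $(S,S)$-invariant $\mathcal{O}$-basis $Y$. Let $P\le S$ and let $\varphi:P\to S$ be an injective group homomorphism such that $\mathcal{A}^\times\cap{}^\varphi\mathcal{A}^P\neq\emptyset$. Then ${}^\varphi_PY_S\cong{}_PY_S$ as $(P,S)$-bisets.
   Context: $\mathcal{O}$ is a complete local noetherian domain with algebraically closed residue field of characteristic $p$. An interior $S$-algebra is an $\mathcal{O}$-free finite-rank $\mathcal{O}$-algebra $\mathcal{A}$ with a group homomorphism $S\to\mathcal{A}^\times$. It is bifree if it has an $\mathcal{O}$-basis $Y$ with $sY=Y=Ys$ for all $s\in S$ (an $(S,S)$-invariant basis, hence an $(S,S)$-biset) on which the left and right $S$-actions are free. ${}^\varphi\mathcal{A}^P=\{a\in\mathcal{A}:\varphi(p)a=ap\ \forall p\in P\}$. ${}_PY_S$ is $Y$ with left action restricted to $P$; ${}^\varphi_PY_S$ is $Y$ with $(P,S)$-action $p\odot y\odot s=\varphi(p)ys$. *)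

From HB Require Import structures.
From mathcomp Require Import all_boot all_order all_algebra all_fingroup all_solvable.
Set Implicit Arguments. Unset Strict Implicit. Unset Printing Implicit Defensive.
Import GRing.Theory.
Local Open Scope ring_scope.

Section Ring.
Variable R : comUnitRingType.

Definition is_ideal (I : R -> Prop) :=
  [/\ I 0, (forall x y, I x -> I y -> I (x - y)) & (forall r x, I x -> I (r * x))].

(* local ring: the non-units form an ideal (which is then the unique maximal ideal) *)
Definition max_ideal : R -> Prop := fun x => x \isn't a GRing.unit.
Definition is_local := is_ideal max_ideal.

Definition is_noetherian :=
  forall I, is_ideal I -> exists s : seq R,
    forall x, I x <-> exists c : 'I_(size s) -> R, x = \sum_(i < size s) c i * s`_i.

Definition ideal_mul (I J : R -> Prop) : R -> Prop := fun x =>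
  exists k (a b : 'I_k -> R),
    [/\ forall i, I (a i), forall i, J (b i) & x = \sum_(i < k) a i * b i].
Fixpoint ideal_pow (I : R -> Prop) (n : nat) : R -> Prop :=
  if n is n'.+1 then ideal_mul I (ideal_pow I n') else (fun _ => True).

Definition is_complete :=
  forall u : nat -> R,
    (forall n, exists N, forall i j, (N <= i)%N -> (N <= j)%N ->
        ideal_pow max_ideal n (u i - u j)) ->
    exists l, forall n, exists N, forall i, (N <= i)%N -> ideal_pow max_ideal n (u i - l).

(* residue field O/m is algebraically closed: every monic polynomial of positive
   degree over O has a root modulo m (every such polynomial over O/m lifts) *)
Definition residue_alg_closed :=
  forall q : {poly R}, q \is monic -> (1 < size q)%N -> exists x, max_ideal q.[x].

Definition residue_char (p : nat) := max_ideal p%:R.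

End Ring.

Definition standing_O (p : nat) (O : idomainType) :=
  [/\ prime p, is_local O, is_noetherian O,
      is_complete O /\ residue_alg_closed O & residue_char O p].

Section Alg.
Variables (O : idomainType) (A : algType O) (gT : finGroupType).

Definition is_unitA (a : A) := exists b : A, a * b = 1 /\ b * a = 1.

Definition interior (S : {set gT}) (sigma : gT -> A) :=
  sigma 1%g = 1 /\ {in S &, forall x y, sigma (x * y)%g = sigma x * sigma y}.

Definition is_Obasis (Y : seq A) :=
  [/\ uniq Y,
      (forall a : A, exists c : 'I_(size Y) -> O, a = \sum_(i < size Y) c i *: Y`_i)
    & (forall c : 'I_(size Y) -> O,
         \sum_(i < size Y) c i *: Y`_i = 0 -> forall i, c i = 0)].

Definition bifree_basis (S : {set gT}) (sigma : gT -> A) (Y : seq A) :=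
  [/\ is_Obasis Y,
      {in S, forall s, {in Y, forall y, sigma s * y \in Y /\ y * sigma s \in Y}},
      {in S, forall s, {in Y, forall y, sigma s * y = y -> s = 1%g}}
    & {in S, forall s, {in Y, forall y, y * sigma s = y -> s = 1%g}}].

Definition twisted_fixed (P : {set gT}) (sigma : gT -> A) (phi : gT -> gT) (a : A) :=
  {in P, forall q, sigma (phi q) * a = a * sigma q}.

Definition twisted_biset_iso (P S : {set gT}) (sigma : gT -> A) (phi : gT -> gT)
    (Y : seq A) :=
  exists f : A -> A,
    [/\ {in Y, forall y, f y \in Y},
        {in Y &, injective f},
        {in Y, forall z, exists2 y, y \in Y & f y = z}
      & {in P, forall q, {in S, forall s, {in Y, forall y,
           f (sigma (phi q) * y * sigma s) = sigma q * f y * sigma s}}}].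

End Alg.

From HB Require Import structures.
From mathcomp Require Import all_boot all_order all_algebra all_fingroup all_solvable.
Set Implicit Arguments. Unset Strict Implicit. Unset Printing Implicit Defensive.

(* A biset isomorphism is an isomorphism between two actions of G = P x S on the basis Y,
   (q, s) : y |-> sigma(phi q)^-1 y sigma(s) and (q, s) : y |-> sigma(q)^-1 y sigma(s).
   By Burnside's theorem on marks it suffices that every subgroup H of G has equally many
   fixed points in both. The matrices of left multiplication by a unit a of ^phi A^P and by
   a^-1 on Y are equivariant between the two actions, and their product is the identity.
   Restricted to H-fixed points the product is still the identity modulo the maximal ideal
   of O: the missing terms come in H-orbits whose size is a positive power of p, and p lies
   in the maximal ideal. Over a local ring, such a pair of rectangular matrices forces the
   two sets of fixed points to have the same size. *)

Lemma acts_setT (aT : finGroupType) (D : {group aT}) (T : finType) (to : action D T) :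
  [acts D, on [set: T] | to].
Proof.
apply/subsetP => g Dg; rewrite inE; apply/andP; split => //.
by rewrite inE; apply/subsetP => i; rewrite !inE.
Qed.

Section Marks.
Local Open Scope group_scope.
Variables (aT : finGroupType) (D : {group aT}) (T : finType) (G : {group aT}).
Hypothesis sGD : G \subset D.
Implicit Types (to : action D T) (B : {set T}) (f : T -> T).

Definition equivariant_inj to1 to2 B1 B2 f :=
  [/\ {in B1, forall x, f x \in B2}, {in B1 &, injective f}
    & {in B1, forall x, {in G, forall a, f (to1 x a) = to2 (f x) a}}].

Definition same_marks to1 to2 B1 B2 :=
  forall H : {group aT}, H \subset G ->
    #|B1 :&: 'Fix_to1(H)| = #|B2 :&: 'Fix_to2(H)|.

Lemma same_marks_sym to1 to2 B1 B2 :
  same_marks to1 to2 B1 B2 -> same_marks to2 to1 B2 B1.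
Proof. by move=> eqm H sHG; rewrite eqm. Qed.

Lemma in_astab1 to x a : a \in D -> (a \in 'C[x | to]) = (to x a == x).
Proof. by move=> Da; rewrite !inE Da sub1set inE. Qed.

Lemma act_eq_of_astab_eq to1 to2 x1 x2 a b :
    'C_G[x1 | to1] = 'C_G[x2 | to2] -> a \in G -> b \in G ->
  to1 x1 a = to1 x1 b -> to2 x2 a = to2 x2 b.
Proof.
move=> eqC Ga Gb eq_ab; have [Da Db] := (subsetP sGD a Ga, subsetP sGD b Gb).
have Gab : a * b^-1 \in G by rewrite groupM ?groupV.
have : a * b^-1 \in 'C_G[x1 | to1].
  by rewrite in_setI Gab in_astab1 ?groupM ?groupV //= actMin ?groupV // eq_ab actKin.
rewrite eqC in_setI Gab in_astab1 ?groupM ?groupV //= actMin ?groupV // => /eqP eq_x2.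
by apply: (act_inj to2 b^-1); rewrite eq_x2 actKin.
Qed.

Lemma orbit_equivariant_inj to1 to2 x1 x2 :
    'C_G[x1 | to1] = 'C_G[x2 | to2] ->
  exists f, equivariant_inj to1 to2 (orbit to1 G x1) (orbit to2 G x2) f.
Proof.
move=> eqC; pose f x := to2 x2 (odflt 1 [pick a in G | to1 x1 a == x]).
have fE a : a \in G -> f (to1 x1 a) = to2 x2 a.
  move=> Ga; rewrite /f; case: pickP => [b /andP[Gb /eqP eq_ba] | /(_ a)] /=.
    exact: act_eq_of_astab_eq eq_ba.
  by rewrite Ga eqxx.
exists f; split.
- by move=> _ /orbitP[a Ga <-]; rewrite fE ?mem_orbit.
- move=> _ _ /orbitP[a Ga <-] /orbitP[b Gb <-]; rewrite !fE //.
  exact: act_eq_of_astab_eq (esym eqC) Ga Gb.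
- move=> _ /orbitP[a Ga <-] b Gb; have [Da Db] := (subsetP sGD a Ga, subsetP sGD b Gb).
  by rewrite -actMin // (fE (a * b)) ?groupM // fE // actMin.
Qed.

Lemma card_afix_le_equivariant to1 to2 B1 B2 f (H : {group aT}) :
    equivariant_inj to1 to2 B1 B2 f -> H \subset G ->
  #|B1 :&: 'Fix_to1(H)| <= #|B2 :&: 'Fix_to2(H)|.
Proof.
move=> [fB f_inj f_act] sHG.
rewrite -(card_in_imset (f := f)); last by move=> x y /setIP[Bx _] /setIP[By _]; apply: f_inj.
apply/subset_leq_card/subsetP => _ /imsetP[x /setIP[Bx /afixP fix_x] ->].
rewrite inE fB //=; apply/afixP => h Hh.
by rewrite -f_act ?fix_x // (subsetP sHG).
Qed.

Lemma exists_same_astab_of_max to1 to2 B1 B2 x1 :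
    same_marks to1 to2 B1 B2 -> x1 \in B1 ->
    (forall y, y \in B2 -> #|'C_G[y | to2]| <= #|'C_G[x1 | to1]|) ->
  exists2 x2, x2 \in B2 & 'C_G[x1 | to1] = 'C_G[x2 | to2].
Proof.
move=> eqm B1x1 max_x1; have sCG : 'C_G[x1 | to1]%G \subset G := subsetIl _ _.
have : 0 < #|B1 :&: 'Fix_to1('C_G[x1 | to1]%G)|.
  apply/card_gt0P; exists x1.
  by rewrite inE B1x1; apply/afixP => h /setIP[_ /astab_act->] //; rewrite set11.
rewrite eqm // => /card_gt0P[x2 /setIP[B2x2 /afixP fix_x2]].
exists x2 => //; apply/eqP; rewrite eqEcard max_x1 // andbT.
apply/subsetP => h Ch; have Gh := subsetP sCG h Ch.
by rewrite in_setI Gh /= in_astab1 ?fix_x2 ?(subsetP sGD).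
Qed.

Lemma same_marks_card to1 to2 B1 B2 : same_marks to1 to2 B1 B2 -> #|B1| = #|B2|.
Proof. by move/(_ 1%G (sub1G G)); rewrite !afix1 !setIT. Qed.

Lemma exists_same_astab_pair to1 to2 B1 B2 y :
    same_marks to1 to2 B1 B2 -> y \in B1 ->
  exists x1 x2, [/\ x1 \in B1, x2 \in B2 & 'C_G[x1 | to1] = 'C_G[x2 | to2]].
Proof.
move=> eqm B1y; have /card_gt0P[y2 B2y2] : 0 < #|B2|.
  by rewrite -(same_marks_card eqm); apply/card_gt0P; exists y.
have [z1 B1z1 max_z1] := arg_maxnP (fun x => #|'C_G[x | to1]|) B1y.
have [z2 B2z2 max_z2] := arg_maxnP (fun x => #|'C_G[x | to2]|) B2y2.
have [le21 | lt12] := leqP #|'C_G[z2 | to2]| #|'C_G[z1 | to1]|.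
  have max_z1' y' : y' \in B2 -> #|'C_G[y' | to2]| <= #|'C_G[z1 | to1]|.
    by move=> B2y'; apply: leq_trans (max_z2 y' B2y') le21.
  have [x2 B2x2 eqC] := exists_same_astab_of_max eqm B1z1 max_z1'.
  by exists z1, x2.
have max_z2' y' : y' \in B1 -> #|'C_G[y' | to1]| <= #|'C_G[z2 | to2]|.
  by move=> B1y'; apply: leq_trans (max_z1 y' B1y') (ltnW lt12).
have [x1 B1x1 eqC] := exists_same_astab_of_max (same_marks_sym eqm) B2z2 max_z2'.
by exists x1, z2.
Qed.

Lemma same_marks_setD_orbit to1 to2 B1 B2 x1 x2 :
    same_marks to1 to2 B1 B2 -> x1 \in B1 -> x2 \in B2 ->
    [acts G, on B1 | to1] -> [acts G, on B2 | to2] ->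
    'C_G[x1 | to1] = 'C_G[x2 | to2] ->
  same_marks to1 to2 (B1 :\: orbit to1 G x1) (B2 :\: orbit to2 G x2).
Proof.
move=> eqm B1x1 B2x2 actsB1 actsB2 eqC H sHG.
have [f12 inj12] := orbit_equivariant_inj eqC.
have [f21 inj21] := orbit_equivariant_inj (esym eqC).
rewrite !setIDAC !cardsD (setIAC B1) (setIAC B2).
have sO1 : orbit to1 G x1 \subset B1 by rewrite acts_sub_orbit.
have sO2 : orbit to2 G x2 \subset B2 by rewrite acts_sub_orbit.
rewrite (setIidPr sO1) (setIidPr sO2) eqm //.
congr (_ - _); apply/eqP; rewrite eqn_leq.
by rewrite (card_afix_le_equivariant inj12 sHG) (card_afix_le_equivariant inj21 sHG).
Qed.

Lemma equivariant_inj_glue to1 to2 B1 B2 (O1 O2 : {set T}) f g :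
    O1 \subset B1 -> O2 \subset B2 -> [acts G, on O1 | to1] ->
    equivariant_inj to1 to2 O1 O2 g ->
    equivariant_inj to1 to2 (B1 :\: O1) (B2 :\: O2) f ->
  equivariant_inj to1 to2 B1 B2 (fun x => if x \in O1 then g x else f x).
Proof.
move=> sOB1 sOB2 actsO1 [gO g_inj g_act] [fB f_inj f_act].
have fB' x : x \in B1 -> x \notin O1 -> f x \in B2 :\: O2.
  by move=> B1x O1x; rewrite fB // inE O1x.
split.
- move=> x B1x; case: ifP => [O1x | /negbT O1x]; first exact: subsetP sOB2 _ (gO x O1x).
  by have /setDP[] := fB' x B1x O1x.
- move=> x y B1x B1y /=.
  case: ifP => [O1x | /negbT O1x]; case: ifP => [O1y | /negbT O1y].
  + exact: g_inj.
  + by move=> eq_xy; have /setDP[_] := fB' y B1y O1y; rewrite -eq_xy gO.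
  + by move=> eq_xy; have /setDP[_] := fB' x B1x O1x; rewrite eq_xy gO.
  + by apply: f_inj; rewrite inE ?O1x ?O1y ?B1x ?B1y.
- move=> x B1x a Ga /=; rewrite (acts_act actsO1 Ga).
  by case: ifP => [O1x | /negbT O1x]; [apply: g_act | apply: f_act; rewrite // inE O1x].
Qed.

(* Induction on #|B1|: an orbit of maximal stabiliser in B1 matches an orbit of B2 with the
   same stabiliser; map one onto the other and remove both. *)
Lemma same_marks_equivariant_inj to1 to2 B1 B2 :
    [acts G, on B1 | to1] -> [acts G, on B2 | to2] -> same_marks to1 to2 B1 B2 ->
  exists f, equivariant_inj to1 to2 B1 B2 f.
Proof.
have [k] := ubnP #|B1|; elim: k B1 B2 => // k IH B1 B2 cardB1 actsB1 actsB2 eqm.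
have [-> | [y B1y]] := set_0Vmem B1; first by exists id; split=> // x; rewrite inE.
have [x1 [x2 [B1x1 B2x2 eqC]]] := exists_same_astab_pair eqm B1y.
have [g g_inj] := orbit_equivariant_inj eqC.
set O1 := orbit to1 G x1; set O2 := orbit to2 G x2.
have ltB1 : #|B1 :\: O1| < k.
  apply: leq_trans (proper_card _) cardB1; apply/properP; split; first exact: subsetDl.
  by exists x1; rewrite // inE orbit_refl.
have [f f_inj] := IH _ _ ltB1 (actsD actsB1 (acts_orbit _ _ sGD))
  (actsD actsB2 (acts_orbit _ _ sGD)) (same_marks_setD_orbit eqm B1x1 B2x2 actsB1 actsB2 eqC).
exists (fun x => if x \in O1 then g x else f x).
by apply: equivariant_inj_glue f_inj; rewrite ?acts_orbit ?acts_sub_orbit.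
Qed.
End Marks.

Lemma dvdn_card_orbit_nonfix (aT : finGroupType) (D H : {group aT}) (T : finType)
    (to : action D T) (p : nat) x :
  H \subset D -> (p.-group H)%g -> x \notin 'Fix_to(H)%g -> p %| #|orbit to H x|.
Proof.
move=> sHD pH nfix_x.
have [k card_Hx] : {k | #|orbit to H x| = p ^ k}.
  by apply: p_natP; apply: pnat_dvd pH; rewrite card_orbit_in ?dvdn_indexg.
case: k card_Hx => [/card_orbit1/orbit1P fix_x | k ->]; last by rewrite expnS dvdn_mulr.
by rewrite fix_x in nfix_x.
Qed.

Import GRing.Theory.
Local Open Scope ring_scope.

Lemma det_mulmx_unit_leq (R : comUnitRingType) m n (X : 'M[R]_(m, n)) (Y : 'M_(n, m)) :
  \det (X *m Y) \is a GRing.unit -> (m <= n)%N.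
Proof.
rewrite leqNgt; apply: contraL => /subnKC; rewrite addSnnS.
move: (m - n.+1)%N => k def_m; move: X Y; rewrite -def_m => X Y.
rewrite -[X *m Y]addr0 -(mul0mx (n + k.+1) (0 : 'M_(k.+1, n + k.+1))) -mul_row_col det_mulmx.
rewrite [\det (col_mx _ _)](expand_det_row _ (rshift n ord0)) big1 ?mulr0 ?unitr0 // => j _.
by rewrite col_mxEd mxE mul0r.
Qed.

Section LocalRing.
Variable R : comUnitRingType.
Hypothesis locR : is_local R.
Local Notation m := (max_ideal (R := R)).

Lemma max_ideal0 : m 0. Proof. by case: locR. Qed.
Lemma max_idealB x y : m x -> m y -> m (x - y). Proof. by case: locR => _ mB _; apply: mB. Qed.
Lemma max_idealMl r x : m x -> m (r * x). Proof. by case: locR => _ _ mM; apply: mM. Qed.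
Lemma max_idealMr r x : m x -> m (x * r). Proof. by rewrite mulrC; apply: max_idealMl. Qed.
Lemma max_idealN x : m x -> m (- x).
Proof. by rewrite -sub0r; apply: max_idealB max_ideal0. Qed.
Lemma max_idealD x y : m x -> m y -> m (x + y).
Proof. by move=> mx my; rewrite -[y]opprK; apply/max_idealB/max_idealN. Qed.
Lemma max_ideal_sum (I : Type) (r : seq I) (P : pred I) (F : I -> R) :
  (forall i, P i -> m (F i)) -> m (\sum_(i <- r | P i) F i).
Proof. by move=> mF; apply: (big_ind m max_ideal0 max_idealD). Qed.

Lemma unit_of_max_ideal_sub1 x : m (x - 1) -> x \is a GRing.unit.
Proof.
move=> mx1; apply/negPn/negP => mx; move: (max_idealB mx mx1).
by rewrite opprB addrC subrK /max_ideal unitr1.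
Qed.

Lemma max_ideal_det_sub1 n (B : 'M[R]_n) :
  (forall i k, m (B i k - (i == k)%:R)) -> m (\det B - 1).
Proof.
move=> mB; rewrite /determinant (bigD1 1%g) //= odd_perm1 expr0 mul1r addrAC.
apply: max_idealD.
  apply: (big_ind (fun x => m (x - 1))); first by rewrite subrr; apply: max_ideal0.
    move=> x y mx my; have -> : x * y - 1 = x * (y - 1) + (x - 1).
      by rewrite mulrBr mulr1 addrA subrK.
    by apply: max_idealD => //; apply: max_idealMl.
  by move=> i _; rewrite perm1; have := mB i i; rewrite eqxx.
apply: max_ideal_sum => s s_neq1.
have [i s_i] : exists i, s i != i.
  apply/existsP; apply: contraR s_neq1 => /existsPn s_fix; apply/eqP/permP => i.
  by rewrite perm1; apply/eqP/negPn.
rewrite (bigD1 i) //= mulrCA; apply: max_idealMr.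
by have := mB i (s i); rewrite eq_sym (negbTE s_i) subr0.
Qed.

Lemma max_ideal_sum_nonfix (aT : finGroupType) (D H : {group aT}) (T : finType)
    (to : action D T) (p : nat) (c : T -> R) :
    H \subset D -> (p.-group H)%g -> m p%:R ->
    (forall x h, h \in H -> c (to x h) = c x) ->
  m (\sum_(x in ~: 'Fix_to(H)%g) c x).
Proof.
move=> sHD pH mp c_inv.
have actsN : [acts H, on ~: 'Fix_to(H)%g | to].
  rewrite astabsC; have := acts_subnorm_fix to H; rewrite (setIidPr sHD).
  by apply: subset_trans; rewrite subsetI sHD normG.
have /and3P[/eqP cover_orbits triv_orbits _] := orbit_partition actsN.
rewrite -cover_orbits big_trivIset //; apply: max_ideal_sum => _ /imsetP[y nfix_y ->].
rewrite (eq_bigr (fun=> c y)); last by move=> _ /orbitP[h Hh <-]; apply: c_inv.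
have nfix_y' : y \notin 'Fix_to(H)%g by rewrite -in_setC.
rewrite sumr_const; have [k ->] := dvdnP (dvdn_card_orbit_nonfix sHD pH nfix_y').
by rewrite mulrnA -mulr_natr; apply: max_idealMl.
Qed.

Lemma card_le_of_inverse_mod (T : finType) (F1 F2 : {set T}) (N M : T -> T -> R) :
    {in F1 &, forall i k, m (\sum_(j in F2) N i j * M j k - (i == k)%:R)} ->
  (#|F1| <= #|F2|)%N.
Proof.
move=> NM_1; pose X := \matrix_(i < #|F1|, j < #|F2|) N (enum_val i) (enum_val j).
pose Y := \matrix_(j < #|F2|, k < #|F1|) M (enum_val j) (enum_val k).
apply: (@det_mulmx_unit_leq _ _ _ X Y).
apply/unit_of_max_ideal_sub1/max_ideal_det_sub1 => i k.
rewrite mxE; under eq_bigr do rewrite !mxE.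
rewrite -(inj_eq enum_val_inj).
rewrite -(big_enum_val (A := mem F2) (fun j => N (enum_val i) j * M j (enum_val k))).
exact: NM_1 (enum_valP i) (enum_valP k).
Qed.

Lemma card_afix_le_of_inverse_coef (aT : finGroupType) (D H : {group aT}) (T : finType)
    (to1 to2 : action D T) (p : nat) (U V : T -> T -> R) :
    H \subset D -> (p.-group H)%g -> m p%:R ->
    (forall i k, \sum_j U i j * V j k = (i == k)%:R) ->
    (forall h i j, h \in H -> U (to1 i h) (to2 j h) = U i j) ->
    (forall h j k, h \in H -> V (to2 j h) (to1 k h) = V j k) ->
  (#|'Fix_to1(H)%g| <= #|'Fix_to2(H)%g|)%N.
Proof.
move=> sHD pH mp UV_1 U_inv V_inv.
apply: (card_le_of_inverse_mod (N := U) (M := V)) => i k /afixP fix_i /afixP fix_k.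
rewrite -UV_1 [X in _ - X](bigID (fun j => j \in 'Fix_to2(H)%g)) /= opprD addrA subrr sub0r.
apply: max_idealN; rewrite (eq_bigl (fun j => j \in ~: 'Fix_to2(H)%g)) => [|j]; last first.
  by rewrite in_setC.
apply: (max_ideal_sum_nonfix sHD pH mp) => j h Hh.
by rewrite -[in U i _](fix_i h Hh) -[in V _ k](fix_k h Hh) U_inv ?V_inv.
Qed.
End LocalRing.

Section BasisAction.
Variables (O : idomainType) (A : algType O) (gT : finGroupType).
Variables (S P : {group gT}) (sigma : gT -> A) (Y : seq A).
Hypothesis sigmaS : interior S sigma.
Hypothesis bfY : bifree_basis S sigma Y.
Local Notation n := (size Y).

Lemma sigma1 : sigma 1%g = 1. Proof. by case: sigmaS. Qed.

Lemma sigmaM : {in S &, {morph sigma : x y / (x * y)%g >-> x * y}}.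
Proof. by case: sigmaS. Qed.

Lemma sigma_mulVg s : s \in S -> sigma s^-1%g * sigma s = 1.
Proof. by move=> Ss; rewrite -sigmaM ?groupV // mulVg sigma1. Qed.

Lemma sigma_mulgV s : s \in S -> sigma s * sigma s^-1%g = 1.
Proof. by move=> Ss; rewrite -sigmaM ?groupV // mulgV sigma1. Qed.

Lemma basis_uniq : uniq Y. Proof. by have [[]] := bfY. Qed.

Lemma nth_basis_inj : injective (fun i : 'I_n => Y`_i).
Proof.
move=> i j eq_ij; apply/val_inj/eqP.
by rewrite -(nth_uniq 0 (ltn_ord i) (ltn_ord j) basis_uniq) eq_ij.
Qed.

Lemma basis_bimul_mem u v y : u \in S -> v \in S -> y \in Y -> sigma u * y * sigma v \in Y.
Proof.
have [_ stableY _ _] := bfY; move=> Su Sv Yy.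
by have [uy _] := stableY u Su y Yy; have [_ -> //] := stableY v Sv _ uy.
Qed.

Lemma basis_coef_inj (c d : 'I_n -> O) :
  \sum_i c i *: Y`_i = \sum_i d i *: Y`_i -> c =1 d.
Proof.
have [[_ _ freeY] _ _ _] := bfY; move=> eq_cd i; apply/eqP; rewrite -subr_eq0; apply/eqP.
move: i; apply: freeY; rewrite (eq_bigr (fun i => c i *: Y`_i - d i *: Y`_i)).
  by rewrite sumrB eq_cd subrr.
by move=> i _; rewrite scalerBl.
Qed.

Lemma sigma_bimul_inj u v : u \in S -> v \in S -> injective (fun x => sigma u * x * sigma v).
Proof.
move=> Su Sv; apply: (can_inj (g := fun x => sigma u^-1%g * x * sigma v^-1%g)) => x.
by rewrite !mulrA sigma_mulVg // mul1r -mulrA sigma_mulgV ?mulr1.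
Qed.

Definition basis_bimul u v (i : 'I_n) : 'I_n :=
  insubd i (index (sigma u * Y`_i * sigma v) Y).

Lemma nth_basis_bimul u v i : u \in S -> v \in S ->
  Y`_(basis_bimul u v i) = sigma u * Y`_i * sigma v.
Proof.
move=> Su Sv; have Y_uiv := basis_bimul_mem Su Sv (mem_nth 0 (ltn_ord i)).
by rewrite val_insubd index_mem Y_uiv nth_index.
Qed.

Section TwistAction.
Variables (rho : {morphism P >-> gT}) (rhoS : (rho @* P \subset S)%g).

Lemma rho_mem q : q \in P -> rho q \in S.
Proof. by move=> Pq; apply/(subsetP rhoS)/mem_morphim. Qed.

(* Inverting [rho q] makes this a right action. *)
Definition twist_act i (g : gT * gT) : 'I_n :=
  if g \in setX P S then basis_bimul (rho g.1)^-1 g.2 i else i.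

Lemma nth_twist_act i g : g \in setX P S ->
  Y`_(twist_act i g) = sigma (rho g.1)^-1%g * Y`_i * sigma g.2.
Proof.
rewrite /twist_act => PSg; rewrite PSg; move: PSg; rewrite inE => /andP[Pg1 Sg2].
by rewrite nth_basis_bimul ?groupV ?rho_mem.
Qed.

Lemma twist_act_is_action : is_action (setX P S) twist_act.
Proof.
split=> [g i j eq_ij | i g h PSg PSh].
  have [PSg | /negbTE notPSg] := boolP (g \in setX P S); last first.
    by move: eq_ij; rewrite /twist_act notPSg.
  have := PSg; rewrite inE => /andP[Pg1 Sg2].
  apply/nth_basis_inj/(sigma_bimul_inj (groupVr (rho_mem Pg1)) Sg2).
  by rewrite /= -!nth_twist_act // eq_ij.
apply: nth_basis_inj; rewrite !nth_twist_act ?groupM //.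
move: PSg PSh; rewrite !inE => /andP[Pg1 Sg2] /andP[Ph1 Sh2] /=.
by rewrite morphM // invMg !sigmaM ?groupV ?rho_mem // !mulrA.
Qed.

Definition twist_action := Action twist_act_is_action.
End TwistAction.

Definition lmul_coef (c : A) (C : 'I_n -> 'I_n -> O) :=
  forall j : 'I_n, c * Y`_j = \sum_i C i j *: Y`_i.

Lemma lmul_coef_exists c : exists C, lmul_coef c C.
Proof.
have [[_ spanY _] _ _ _] := bfY.
have [C' C'_def] := fin_all_exists (fun j : 'I_n => spanY (c * Y`_j)).
by exists (fun i j => C' j i).
Qed.

Lemma lmul_coef_mul1 c c' C C' : c' * c = 1 -> lmul_coef c C -> lmul_coef c' C' ->
  forall i k, \sum_j C' i j * C j k = (i == k)%:R.
Proof.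
move=> c'c cC c'C' i k; move: i; apply: basis_coef_inj.
have -> : \sum_i (i == k)%:R *: Y`_i = Y`_k.
  by rewrite (bigD1 k) //= eqxx scale1r big1 ?addr0 // => i /negbTE->; rewrite scale0r.
rewrite -[Y`_k]mul1r -c'c -mulrA cC mulr_sumr.
rewrite [RHS](eq_bigr (fun j => \sum_i (C' i j * C j k) *: Y`_i)) => [|j _]; last first.
  by rewrite -scalerAr c'C' scaler_sumr; apply: eq_bigr => i _; rewrite scalerA mulrC.
by rewrite [RHS]exchange_big; apply: eq_bigr => i _; rewrite scaler_suml.
Qed.

Definition intertwines (rho1 rho2 : gT -> gT) (c : A) :=
  {in P, forall q, sigma (rho1 q) * c = c * sigma (rho2 q)}.

Lemma intertwines_inv rho1 rho2 c c' : c * c' = 1 -> c' * c = 1 ->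
  intertwines rho1 rho2 c -> intertwines rho2 rho1 c'.
Proof.
move=> cc' c'c c_tw q Pq.
by rewrite -[LHS]mul1r -c'c -!mulrA (mulrA c) -c_tw // -mulrA cc' mulr1.
Qed.

Lemma lmul_coef_twist_act (rho1 rho2 : {morphism P >-> gT})
    (r1S : (rho1 @* P \subset S)%g) (r2S : (rho2 @* P \subset S)%g) c C g :
    intertwines rho1 rho2 c -> lmul_coef c C -> g \in setX P S ->
  forall i j, C (twist_action r1S i g) (twist_action r2S j g) = C i j.
Proof.
move=> c_tw cC PSg; set to1 := twist_action r1S; set to2 := twist_action r2S.
have := PSg; rewrite inE => /andP[Pg1 Sg2].
have c_tw' : c * sigma (rho2 g.1)^-1%g = sigma (rho1 g.1)^-1%g * c.
  by rewrite -!morphV // c_tw ?groupV.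
have shift k j : C k (to2 j g) = C (to1 k g^-1%g) j.
  move: k; apply: basis_coef_inj; rewrite -cC nth_twist_act // !mulrA c_tw'.
  rewrite -(mulrA _ c) cC mulr_sumr mulr_suml [RHS](reindex_inj (act_inj to1 g)).
  apply: eq_bigr => i _; rewrite actKin // nth_twist_act //.
  by rewrite -scalerAr -scalerAl.
by move=> i j; rewrite shift actKin.
Qed.

Lemma card_afix_twist_le (p : nat) (rho1 rho2 : {morphism P >-> gT})
    (r1S : (rho1 @* P \subset S)%g) (r2S : (rho2 @* P \subset S)%g)
    (H : {group gT * gT}) c c' :
    is_local O -> max_ideal (p%:R : O) -> (p.-group H)%g -> H \subset setX P S ->
    c * c' = 1 -> c' * c = 1 -> intertwines rho1 rho2 c ->
  (#|'Fix_(twist_action r2S)(H)%g| <= #|'Fix_(twist_action r1S)(H)%g|)%N.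
Proof.
move=> locO mp pH sH cc' c'c c_tw.
have [C cC] := lmul_coef_exists c; have [C' c'C'] := lmul_coef_exists c'.
apply: (card_afix_le_of_inverse_coef locO sH pH mp (lmul_coef_mul1 c'c cC c'C')).
  move=> h i j Hh; have c'_tw := intertwines_inv cc' c'c c_tw.
  exact: lmul_coef_twist_act c'_tw c'C' (subsetP sH h Hh) i j.
by move=> h i j Hh; apply: lmul_coef_twist_act c_tw cC (subsetP sH h Hh) i j.
Qed.

Lemma twisted_biset_iso_of_index (phi : {morphism P >-> gT})
    (phiS : (phi @* P \subset S)%g) (idS : (idm P @* P \subset S)%g) (f : 'I_n -> 'I_n) :
    injective f ->
    (forall i g, g \in setX P S -> f (twist_action phiS i g) = twist_action idS (f i) g) ->
  twisted_biset_iso P S sigma phi Y.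
Proof.
move=> f_inj f_act; have [f' fK f'K] := injF_bij f_inj.
pose F y := if insub (index y Y) is Some i then Y`_(f i) else y.
have FE (i : 'I_n) : F Y`_i = Y`_(f i) by rewrite /F index_uniq ?basis_uniq // valK.
have memY y : y \in Y -> exists i : 'I_n, y = Y`_i.
  by move=> Yy; exists (Ordinal (etrans (index_mem y Y) Yy)); rewrite nth_index.
exists F; split.
- by move=> _ /memY[i ->]; rewrite FE mem_nth.
- by move=> _ _ /memY[i ->] /memY[j ->]; rewrite !FE => /nth_basis_inj/f_inj ->.
- by move=> _ /memY[k ->]; exists Y`_(f' k); rewrite ?mem_nth // FE f'K.
move=> q Pq s Ss _ /memY[i ->].
have PSg : (q^-1, s)%g \in setX P S by rewrite inE /= groupV Pq.
have := nth_twist_act phiS i PSg; have := nth_twist_act idS (f i) PSg.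
by rewrite /= morphV // !invgK => Y_id Y_phi; rewrite -Y_phi !FE -Y_id (f_act i _ PSg).
Qed.

End BasisAction.

Theorem lemma4p1 (p : nat) (O : idomainType) (A : algType O) (gT : finGroupType)
    (S P : {group gT}) (sigma : gT -> A) (Y : seq A) (phi : {morphism P >-> gT}) :
  standing_O p O ->
  (p.-group S)%g ->
  interior S sigma ->
  bifree_basis S sigma Y ->
  P \subset S ->
  ('injm phi)%g ->
  (phi @* P \subset S)%g ->
  (exists a : A, is_unitA a /\ twisted_fixed P sigma phi a) ->
  twisted_biset_iso P S sigma phi Y.
Proof.
move=> [_ locO _ _ mp] pS sigmaS bfY sPS _ phiS [a [[b [ab ba]] a_tw]].
have idS : (idm P @* P \subset S)%g by rewrite morphim_idm.
set to_phi := twist_action sigmaS bfY phiS; set to_id := twist_action sigmaS bfY idS.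
have pPS : (p.-group (setX P S))%g.
  by rewrite /pgroup cardsX pnatM; apply/andP; split; [apply: pgroupS sPS pS | apply: pS].
have marks : same_marks (setX P S) to_phi to_id [set: 'I_(size Y)] [set: 'I_(size Y)].
  move=> H sH; have pH := pgroupS sH pPS; rewrite !setTI; apply/eqP; rewrite eqn_leq.
  rewrite (card_afix_twist_le sigmaS bfY phiS idS locO mp pH sH ab ba a_tw).
  have b_tw := intertwines_inv ab ba a_tw.
  by rewrite (card_afix_twist_le sigmaS bfY idS phiS locO mp pH sH ba ab b_tw).
have [f [_ f_inj f_act]] :=
  same_marks_equivariant_inj (subxx _) (acts_setT _) (acts_setT _) marks.
apply: (twisted_biset_iso_of_index (f := f)) => [i j | i g PSg].
  exact: f_inj.
exact: f_act.
Qed.
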